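(* Let $\mathbb{K}$ be a field, $R=\mathbb{K}[X_1,\ldots,X_n]$, $J\subsetneq I\subset R$ monomial ideals. Let $I'$ and $J'$ be the monomial ideals in $\mathbb{K}[X_1,\ldots,X_n,X_{n+1}]$ obtained from $I$ and $J$ by replacing, in each minimal generator of $I$ and $J$, every occurrence of the variable $X_n$ by the product $X_nX_{n+1}$. Then $\operatorname{sdepth} I'/J'=\operatorname{sdepth} I/J+1$.
   Context: Stanley depth: with the fine multigrading, a Stanley decomposition of a finitely generated multigraded module $M$ is a finite family $(\mathbb{K}[Z_i], m_i)$ with $m_i$ homogeneous, $Z_i$ subsets of the variables, $m_i\mathbb{K}[Z_i]$ free over $\mathbb{K}[Z_i]$, and $M=\bigoplus_i m_i\mathbb{K}[Z_i]$ as multigraded $\mathbb{K}$-vector spaces; its depth is $\min_i|Z_i|$, and $\operatorname{sdepth}M$ is the maximal depth of a Stanley decomposition. *)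

From HB Require Import structures.
From mathcomp Require Import all_boot all_order all_algebra.
From mathcomp Require Import mpoly.
From Stdlib Require Import ClassicalEpsilon.
Set Implicit Arguments. Unset Strict Implicit. Unset Printing Implicit Defensive.
Import GRing.Theory.
Local Open Scope ring_scope.

Section MonomialStanley.
Variables (K : fieldType) (k : nat).

Definition polyset := {mpoly K[k]} -> Prop.

Definition mon_gen_ideal (S : 'X_{1..k} -> Prop) : polyset :=
  fun p => exists r : seq ({mpoly K[k]} * 'X_{1..k}),
    (forall x, x \in r -> S x.2) /\ p = \sum_(x <- r) x.1 * 'X_[x.2].

Definition is_monomial_ideal (I : polyset) : Prop :=
  exists S : 'X_{1..k} -> Prop, forall p, I p <-> mon_gen_ideal S p.

Definition mdivides (v u : 'X_{1..k}) : bool := [forall i, v i <= u i]%N.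

Definition min_gens (I : polyset) (u : 'X_{1..k}) : Prop :=
  I 'X_[u] /\ forall v : 'X_{1..k}, I 'X_[v] -> mdivides v u -> v = u.

Definition polys_in (Z : {set 'I_k}) (f : {mpoly K[k]}) : Prop :=
  forall m : 'X_{1..k}, m \in msupp f -> forall i, i \notin Z -> m i = 0%N.

(* A Stanley decomposition (K[Z_i], m_i)_{i<r} of the multigraded module I/J.
   m_i is a homogeneous element of I/J, represented by a homogeneous
   (fine multigrading) element of I, i.e. c * X^a in I. *)
Definition stanley_dec (I J : polyset) (r : nat)
    (D : 'I_r -> {set 'I_k} * {mpoly K[k]}) : Prop :=
  (forall i, I (D i).2 /\ exists (c : K) (a : 'X_{1..k}), (D i).2 = c *: 'X_[a])
  /\ (* m_i K[Z_i] is free over K[Z_i] (as a submodule of I/J) *)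
  (forall i f, polys_in (D i).1 f -> J ((D i).2 * f) -> f = 0)
  /\ (* the sum of the m_i K[Z_i] is all of I/J *)
  (forall p, I p -> exists f : 'I_r -> {mpoly K[k]},
      (forall i, polys_in (D i).1 (f i)) /\
      J (p - \sum_(i < r) (D i).2 * f i))
  /\ (* the sum is direct *)
  (forall f : 'I_r -> {mpoly K[k]}, (forall i, polys_in (D i).1 (f i)) ->
      J (\sum_(i < r) (D i).2 * f i) -> forall i, J ((D i).2 * f i)).

Definition has_sdec_depth_ge (I J : polyset) (d : nat) : Prop :=
  exists r (D : 'I_r -> {set 'I_k} * {mpoly K[k]}),
    @stanley_dec I J r D /\ forall i, (d <= #|(D i).1|)%N.

Definition pbool (P : Prop) : bool :=
  if excluded_middle_informative P then true else false.

(* sdepth I/J: the maximal depth of a Stanley decomposition (depths are <= k) *)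
Definition sdepth (I J : polyset) : nat :=
  (\max_(d < k.+1 | pbool (has_sdec_depth_ge I J d)) d)%N.

End MonomialStanley.

(* R = K[X_0,...,X_n] (so X_n is the last variable, ord_max);
   R' = K[X_0,...,X_n,X_{n+1}].  phi u replaces X_n by X_n X_{n+1} in X^u. *)
Definition ext_mon (n : nat) (u : 'X_{1..n.+1}) : 'X_{1..n.+2} :=
  [multinom (if unlift ord_max i is Some j then u j else u ord_max) | i < n.+2].

Definition ext_ideal (K : fieldType) (n : nat) (I : polyset K n.+1)
  : polyset K n.+2 :=
  mon_gen_ideal (fun w => exists u, min_gens I u /\ w = ext_mon u).

(* Since I and J are monomial ideals, a Stanley decomposition of I/J amounts
   to a partition of the monomials of I outside J into finitely many cones
   a + N^Z, its depth being the least |Z|.  A monomial X^w of the larger ring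
   lies in I' iff X^(contract w) lies in I, where contract w replaces the last
   two exponents w_n, w_(n+1) by min(w_n, w_(n+1)).  Each cone (Z, a) of I/J is
   the image under contract of one cone (if X_n is free in it) or of two cones
   of dimension |Z| + 1, whence sdepth I'/J' >= sdepth I/J + 1.  Conversely,
   intersecting a decomposition of I'/J' with a slice w_(n+1) = w_n + N, N
   beyond every apex, keeps exactly the cones in which X_(n+1) is free, and
   contract identifies the slice with the monomials of the smaller ring: this
   gives a decomposition of I/J of depth one less.  Dickson's lemma provides
   some decomposition, so both maxima defining sdepth are attained. *)

From HB Require Import structures.
From mathcomp Require Import all_boot all_order all_algebra.
From mathcomp Require Import mpoly.
From Stdlib Require Import Classical ClassicalEpsilon.
From mathcomp Require Import zify.
Set Implicit Arguments. Unset Strict Implicit. Unset Printing Implicit Defensive.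
Import GRing.Theory.
Local Open Scope ring_scope.

Lemma pboolP (P : Prop) : reflect P (pbool P).
Proof. by rewrite /pbool; case: excluded_middle_informative => h; constructor. Qed.

Lemma pbool_iff (P Q : Prop) : (P <-> Q) -> pbool P = pbool Q.
Proof. by move=> PQ; apply/pboolP/pboolP => /PQ. Qed.

Section MonomialIdeal.
Variables (K : fieldType) (k : nat).
Implicit Types (p : {mpoly K[k]}) (m u v : 'X_{1..k}) (I : polyset K k).

Lemma mon_gen_idealP (S : 'X_{1..k} -> Prop) p :
  mon_gen_ideal S p <-> forall m, m \in msupp p -> exists2 s, S s & (s <= m)%MM.
Proof.
split.
  case=> gs [gsS ->] m /msupp_sum_le /flattenP [t /mapP [x xgs ->]].
  rewrite (perm_mem (msuppMX _ _)) => /mapP [m' _ ->].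
  move: xgs; rewrite filter_predT => xgs.
  by exists x.2; [exact: gsS xgs | exact: lem_addr].
move=> H.
have sel m : {s | m \in msupp p -> S s /\ (s <= m)%MM}.
  case: (excluded_middle_informative (m \in msupp p)) => [hm|]; last by exists m.
  have /constructive_indefinite_description [s hs] : exists s, S s /\ (s <= m)%MM.
    by have [s Ss lsm] := H m hm; exists s.
  by exists s.
pose g m := sval (sel m).
exists [seq (p@_m *: 'X_[m - g m], g m) | m <- msupp p]; split.
  by move=> x /mapP [m hm ->]; exact: (svalP (sel m) hm).1.
rewrite big_map [LHS]mpolyE big_seq [RHS]big_seq; apply: eq_bigr => m hm /=.
by rewrite -scalerAl -mpolyXD submK //; exact: (svalP (sel m) hm).2.
Qed.

Lemma monomial_idealP I : is_monomial_ideal I ->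
  forall p, I p <-> forall m, m \in msupp p -> I 'X_[m].
Proof.
case=> S HS p; rewrite HS mon_gen_idealP; split=> H m hm.
  by apply/HS/mon_gen_idealP => m'; rewrite msuppX inE => /eqP ->; exact: H.
by have /HS/mon_gen_idealP := H m hm; apply; rewrite msuppX inE.
Qed.

Lemma monomial_ideal0 I : is_monomial_ideal I -> I 0.
Proof. by move=> hI; apply/(monomial_idealP hI) => m; rewrite msupp0. Qed.

Lemma monomial_idealX_lem I : is_monomial_ideal I ->
  forall m m', I 'X_[m] -> (m <= m')%MM -> I 'X_[m'].
Proof.
case=> S HS m m' /HS /mon_gen_idealP Im le; apply/HS/mon_gen_idealP => x.
rewrite msuppX inE => /eqP ->.
have := Im m; rewrite msuppX mem_head => /(_ isT) [s Ss lsm].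
by exists s => //; exact: lepm_trans lsm le.
Qed.

Lemma monomial_idealZ I : is_monomial_ideal I ->
  forall c m, I 'X_[m] -> I (c *: 'X_[m]).
Proof.
move=> hI c m Im; apply/(monomial_idealP hI) => x /msuppZ_le.
by rewrite msuppX inE => /eqP ->.
Qed.

Lemma mdividesE u v : mdivides u v = (u <= v)%MM.
Proof. by apply/forallP/mnm_lepP. Qed.

Lemma min_gens_exists I v : I 'X_[v] -> exists2 u, min_gens I u & (u <= v)%MM.
Proof.
move: {2}(mdeg v).+1 (ltnSn (mdeg v)) => N; elim: N v => // N IH v degv Iv.
case: (classic (min_gens I v)) => [minv|nminv]; first by exists v => //; exact: lepm_refl.
have [v' [Iv' le ne]] : exists v', [/\ I 'X_[v'], (v' <= v)%MM & v' <> v].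
  apply: NNPP => hn; apply: nminv; split => // v' Iv'; rewrite mdividesE => le.
  by apply: NNPP => ne; apply: hn; exists v'.
have lt : (mdeg v' < N)%N.
  rewrite -ltnS; apply: leq_trans degv; have E : v = (v' + (v - v'))%MM by rewrite addmC submK.
  rewrite [in X in (_ < X)%N]E mdegD -[X in (X < _)%N]addn0 ltn_add2l lt0n.
  by rewrite mdeg_eq0; apply/eqP => e; apply: ne; rewrite E e addm0.
have [u minu leu] := IH v' lt Iv'.
by exists u => //; exact: lepm_trans leu le.
Qed.

End MonomialIdeal.

Notation cone k := ({set 'I_k} * 'X_{1..k})%type.

Section Cones.
Variable k : nat.
Implicit Types (x : cone k) (m u : 'X_{1..k}) (M : 'X_{1..k} -> Prop).

Definition in_cone x m : bool :=
  (x.2 <= m)%MM && [forall i, (i \notin x.1) ==> (m i == x.2 i)].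

Lemma in_coneP x m :
  reflect (forall i, x.2 i <= m i /\ (i \notin x.1 -> m i = x.2 i))%N (in_cone x m).
Proof.
apply: (iffP andP) => [[/mnm_lepP le /forallP H] i|H]; split.
- exact: le.
- by move=> ni; apply/eqP; exact: (implyP (H i)).
- by apply/mnm_lepP => i; case: (H i).
- by apply/forallP => i; apply/implyP => ni; apply/eqP; case: (H i) => _; apply.
Qed.

Lemma in_coneDP (Z : {set 'I_k}) (a m : 'X_{1..k}) :
  reflect (exists2 u : 'X_{1..k}, (forall i, i \notin Z -> u i = 0%N) & m = (a + u)%MM)
          (in_cone (Z, a) m).
Proof.
apply: (iffP andP) => /= [[le /forallP H]|[u hu ->]].
  exists (m - a)%MM; last by rewrite addmC submK.
  by move=> i iZ; rewrite mnmBE (eqP (implyP (H i) iZ)) subnn.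
split; first exact: lem_addr.
by apply/forallP => i; apply/implyP => iZ; rewrite mnmDE hu // addn0.
Qed.

Lemma in_cone_apex x : in_cone x x.2.
Proof.
case: x => Z a; apply/in_coneDP; exists 0%MM; last by rewrite addm0.
by move=> i _; rewrite mnm0E.
Qed.

(* Counting cones with multiplicity makes [cone_dec M s] say that the cones
   of [s] partition [M]. *)
Definition cone_dec M (s : seq (cone k)) :=
  forall m, count (in_cone^~ m) s = pbool (M m).

Definition has_cone_dec M d :=
  exists2 s, cone_dec M s & forall x, x \in s -> (d <= #|x.1|)%N.

Definition cone_partition M r (F : 'I_r -> cone k) :=
  [/\ forall i m, in_cone (F i) m -> M m,
      forall m, M m -> exists i, in_cone (F i) m &
      forall i j m, in_cone (F i) m -> in_cone (F j) m -> i = j].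

Lemma cone_partitionE M r (F : 'I_r -> cone k) :
  cone_partition M F <-> forall m, (\sum_(i < r) in_cone (F i) m)%N = pbool (M m).
Proof.
split.
  case=> Fsub Fcov Fdisj m; case: pboolP => hM.
    have [i hi] := Fcov m hM; rewrite (bigD1 i) //= hi big1 // => j nji.
    by case hj: (in_cone (F j) m) => //; move: nji; rewrite (Fdisj j i m hj hi) eqxx.
  by rewrite big1 // => i _; case hi: (in_cone (F i) m) => //; case: hM; exact: Fsub hi.
move=> H; split.
- by move=> i m hi; have := H m; rewrite (bigD1 i) //= hi; case: pboolP.
- move=> m hM; have := H m; case: pboolP => // _ hs; apply: NNPP => hn.
  move: hs; rewrite big1 // => i _.
  by case hi: (in_cone (F i) m) => //; case: hn; exists i.
- move=> i j m hi hj; apply: NNPP => nij.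
  have := H m; rewrite (bigD1 i) //= hi (bigD1 j) /=; last exact/eqP/nesym.
  by rewrite hj; case: pbool.
Qed.

Lemma count_sum_nth (T : Type) (x0 : T) (a : pred T) s :
  count a s = (\sum_(i < size s) a (nth x0 s i))%N.
Proof. by elim: s => [|x s IH] /=; rewrite ?big_ord0 // big_ord_recl /= IH. Qed.

Lemma count_map_enum (T : Type) r (F : 'I_r -> T) (a : pred T) :
  count a [seq F i | i <- enum 'I_r] = (\sum_(i < r) a (F i))%N.
Proof.
rewrite count_map -sum1_count big_enum_cond /= big_mkcond /=.
by apply: eq_bigr => i _; case: (a (F i)).
Qed.

Lemma has_cone_decP M d : has_cone_dec M d <->
  exists r (F : 'I_r -> cone k), cone_partition M F /\ forall i, (d <= #|(F i).1|)%N.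
Proof.
split=> [[s hs hd]|[r [F [hF hd]]]].
  exists (size s), (nth (set0, 0%MM) s); split => [|i]; last exact/hd/mem_nth.
  by apply/cone_partitionE => m; rewrite -hs (count_sum_nth (set0, 0%MM)).
exists [seq F i | i <- enum 'I_r]; last by move=> x /mapP [i _ ->].
by move=> m; rewrite count_map_enum; exact: (cone_partitionE _ _).1 hF m.
Qed.

End Cones.

Section PolysIn.
Variables (K : fieldType) (k : nat).
Implicit Types (f : {mpoly K[k]}) (m a u : 'X_{1..k}) (Z : {set 'I_k}).

Lemma polys_inX Z u :
  polys_in Z ('X_[u] : {mpoly K[k]}) <-> forall i, i \notin Z -> u i = 0%N.
Proof.
split=> [H i iZ | H m]; first by apply: H iZ; rewrite msuppX mem_head.
by rewrite msuppX inE => /eqP ->.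
Qed.

Lemma polys_inZ Z c f : polys_in Z f -> polys_in Z (c *: f).
Proof. by move=> H m /msuppZ_le; exact: H. Qed.

Lemma polys_inN Z f : polys_in Z f -> polys_in Z (- f).
Proof. by move=> H m; rewrite (perm_mem (msuppN _)); exact: H. Qed.

Lemma polys_in0 Z : polys_in Z (0 : {mpoly K[k]}).
Proof. by move=> m; rewrite msupp0. Qed.

Lemma polys_in1 Z : polys_in Z (1 : {mpoly K[k]}).
Proof. by move=> m; rewrite msupp1 inE => /eqP -> i _; rewrite mnm0E. Qed.

Lemma polys_in_cone (x : cone k) f m :
  polys_in x.1 f -> m \in msupp f -> in_cone x (x.2 + m)%MM.
Proof. by case: x => Z a fZ fm; apply/in_coneDP; exists m => // i; exact: fZ. Qed.

Lemma mpolyX_neq0 u : ('X_[u] : {mpoly K[k]}) != 0.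
Proof. by rewrite -msupp_eq0 msuppX. Qed.

Lemma msuppMXP f a m :
  m \in msupp (f * 'X_[a]) -> exists2 m', m' \in msupp f & m = (a + m')%MM.
Proof. by rewrite (perm_mem (msuppMX _ _)) => /mapP [m' h ->]; exists m'. Qed.

Lemma msuppMX_add f a m : m \in msupp f -> (a + m)%MM \in msupp (f * 'X_[a]).
Proof. by rewrite !mcoeff_msupp mcoeffMX. Qed.

End PolysIn.

Section Transfer.
Variables (K : fieldType) (k : nat) (I J : polyset K k).
Hypotheses (hI : is_monomial_ideal I) (hJ : is_monomial_ideal J).
Implicit Types (p f : {mpoly K[k]}) (m : 'X_{1..k}) (x : cone k).

Definition mon_quot m := I 'X_[m] /\ ~ J 'X_[m].

Lemma cone_mulX_free x f : (forall m, in_cone x m -> ~ J 'X_[m]) ->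
  polys_in x.1 f -> J ('X_[x.2] * f) -> f = 0.
Proof.
move=> xJ fx Jxf; apply/eqP; rewrite -msupp_eq0.
case E: (msupp f) => [//|m t]; have fm : m \in msupp f by rewrite E mem_head.
exfalso; apply: (xJ _ (polys_in_cone fx fm)); apply: ((monomial_idealP hJ _).1 Jxf).
by rewrite mulrC msuppMX_add.
Qed.

Definition cone_part x p := \sum_(m <- msupp p | in_cone x m) p@_m *: 'X_[m - x.2].

Lemma polys_in_cone_part x p : polys_in x.1 (cone_part x p).
Proof.
move=> m' /msupp_sum_le /flattenP [s /mapP [m hm ->]].
move/msuppZ_le; rewrite msuppX inE => /eqP ->.
move: hm; rewrite mem_filter => /andP [+ _].
by case: x => Z a /in_coneDP [u hu ->] /= j jZ; rewrite addmC addmK; exact: hu.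
Qed.

Lemma mulX_cone_part x p :
  'X_[x.2] * cone_part x p = \sum_(m <- msupp p | in_cone x m) p@_m *: 'X_[m].
Proof.
rewrite mulr_sumr; apply: eq_bigr => m; rewrite -scalerAr -mpolyXD.
by case: x => Z a /in_coneDP [u _ ->] /=; rewrite [(a + u)%MM]addmC addmK addmC.
Qed.

Section ConesToStanley.
Variables (r : nat) (F : 'I_r -> cone k).
Hypothesis hF : cone_partition mon_quot F.

Lemma sum_mulX_cone_part p :
  \sum_(i < r) 'X_[(F i).2] * cone_part (F i) p =
  \sum_(m <- msupp p | pbool (mon_quot m)) p@_m *: 'X_[m].
Proof.
under eq_bigr do rewrite mulX_cone_part big_mkcond.
rewrite exchange_big /= [RHS]big_mkcond; apply: eq_bigr => m _.
rewrite -mulrb -((cone_partitionE _ _).1 hF m) -sumrMnr.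
by apply: eq_bigr => i _; rewrite mulrb.
Qed.

Lemma cone_partition_cover p : I p -> exists f : 'I_r -> {mpoly K[k]},
  (forall i, polys_in (F i).1 (f i)) /\ J (p - \sum_(i < r) 'X_[(F i).2] * f i).
Proof.
move=> Ip; exists (fun i => cone_part (F i) p); split => [i|]; first exact: polys_in_cone_part.
rewrite sum_mulX_cone_part {1}[p]mpolyE (bigID (fun m => pbool (mon_quot m))) /=.
rewrite addrAC subrr add0r; apply/(monomial_idealP hJ) => m' /msupp_sum_le /flattenP.
case=> s /mapP [m hm ->] /msuppZ_le; rewrite msuppX inE => /eqP ->.
move: hm; rewrite mem_filter => /andP [/pboolP hM hmp].
apply: NNPP => hJm; apply: hM; split => //.
exact: (monomial_idealP hI _).1 Ip m hmp.
Qed.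

Lemma cone_partition_direct (f : 'I_r -> {mpoly K[k]}) :
  (forall i, polys_in (F i).1 (f i)) ->
  J (\sum_(i < r) 'X_[(F i).2] * f i) -> forall i, J ('X_[(F i).2] * f i).
Proof.
have [Fsub _ Fdisj] := hF.
move=> hf Jsum i; suff -> : f i = 0 by rewrite mulr0; exact: monomial_ideal0.
apply/eqP; rewrite -msupp_eq0.
case E: (msupp (f i)) => [//|m' t]; have fim' : m' \in msupp (f i) by rewrite E mem_head.
exfalso.
have im := polys_in_cone (hf i) fim'; set m := ((F i).2 + m')%MM in im.
have coef_sum : (\sum_j 'X_[(F j).2] * f j)@_m = (f i)@_m'.
  rewrite raddf_sum (bigD1 i) //= big1 ?addr0; first by rewrite mulrC mcoeffMX.
  move=> j nji; apply/eqP; apply: NNPP => /negP.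
  rewrite -mcoeff_msupp mulrC => /msuppMXP [m'' fjm'' Em].
  have jm := polys_in_cone (hf j) fjm''; rewrite -Em in jm.
  by move: nji; rewrite (Fdisj j i m jm im) eqxx.
have : m \in msupp (\sum_j 'X_[(F j).2] * f j).
  by rewrite mcoeff_msupp coef_sum -mcoeff_msupp.
by move/((monomial_idealP hJ _).1 Jsum); have [_] := Fsub i m im.
Qed.

Lemma stanley_dec_of_cone_partition :
  stanley_dec I J (fun i => ((F i).1, ('X_[(F i).2] : {mpoly K[k]}))).
Proof.
have [Fsub _ _] := hF; split; [|split; [|split]] => /=.
- move=> i; split; last by exists 1, (F i).2; rewrite scale1r.
  exact: (Fsub i _ (in_cone_apex (F i))).1.
- by move=> i f; apply: cone_mulX_free => m /Fsub [].
- exact: cone_partition_cover.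
- exact: cone_partition_direct.
Qed.

End ConesToStanley.

Section StanleyToCones.
Variables (r : nat) (D : 'I_r -> {set 'I_k} * {mpoly K[k]}).
Variables (c : 'I_r -> K) (a : 'I_r -> 'X_{1..k}).
Hypotheses (hD : stanley_dec I J D) (Dca : forall i, (D i).2 = c i *: 'X_[a i]).

Lemma stanley_coef_neq0 i : c i != 0.
Proof.
have [_ [Dfree _]] := hD.
apply/eqP => c0; have := Dfree i 1 (@polys_in1 _ _ _).
rewrite Dca c0 scale0r mul0r => /(_ (monomial_ideal0 hJ)) /eqP.
by rewrite oner_eq0.
Qed.

Lemma stanley_cone_sub i m : in_cone ((D i).1, a i) m -> mon_quot m.
Proof.
have [Dgen [Dfree _]] := hD.
move=> /in_coneDP [u hu ->]; split.
  apply: monomial_idealX_lem hI _ _ _ (lem_addr _ _).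
  apply: (monomial_idealP hI _).1 (Dgen i).1 _ _.
  by rewrite Dca msuppMCX ?mem_head // stanley_coef_neq0.
move=> Jau; have := Dfree i 'X_[u] ((polys_inX _ _ _).2 hu).
rewrite Dca -scalerAl -mpolyXD => /(_ (monomial_idealZ hJ _ Jau)) /eqP.
by rewrite (negbTE (mpolyX_neq0 _ _)).
Qed.

Lemma stanley_cone_cover m : mon_quot m -> exists i, in_cone ((D i).1, a i) m.
Proof.
have [_ [_ [Dcov _]]] := hD.
move=> [Im nJm]; have [f [hf Jrest]] := Dcov _ Im; apply: NNPP => hn.
have coef0 i : ((D i).2 * f i)@_m = 0.
  apply/eqP; apply: contra_notT hn.
  rewrite -mcoeff_msupp Dca -scalerAl mulrC => /msuppZ_le /msuppMXP [m' fm' ->].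
  by exists i; exact: (polys_in_cone (x := ((D i).1, a i)) (hf i) fm').
have : m \in msupp ('X_[m] - \sum_i (D i).2 * f i).
  rewrite mcoeff_msupp mcoeffB raddf_sum big1 => [|i _]; last exact: coef0.
  by rewrite subr0 -mcoeff_msupp msuppX mem_head.
by move/((monomial_idealP hJ _).1 Jrest).
Qed.

Lemma stanley_cone_disjoint i j m :
  in_cone ((D i).1, a i) m -> in_cone ((D j).1, a j) m -> i = j.
Proof.
have [_ [_ [_ Ddirect]]] := hD.
move=> im jm; apply: NNPP => nij.
have mul_cofactor l : in_cone ((D l).1, a l) m ->
    (D l).2 * ((c l)^-1 *: 'X_[(m - a l)%MM]) = 'X_[m].
  move=> /andP [/= le _].
  rewrite Dca -scalerAl -scalerAr scalerA mulfV ?stanley_coef_neq0 // scale1r.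
  by rewrite -mpolyXD addmC submK.
pose f l : {mpoly K[k]} := if l == i then (c i)^-1 *: 'X_[(m - a i)%MM]
      else if l == j then - ((c j)^-1 *: 'X_[(m - a j)%MM]) else 0.
have hf l : polys_in (D l).1 (f l).
  have cofactor_in l' : in_cone ((D l').1, a l') m ->
      polys_in (D l').1 ((c l')^-1 *: 'X_[(m - a l')%MM]).
    by move=> /in_coneDP [u hu ->]; apply/polys_inZ/polys_inX; rewrite addmC addmK.
  rewrite /f; case: eqP => [->|_]; first exact: cofactor_in.
  by case: eqP => [->|_]; [exact/polys_inN/cofactor_in | exact: polys_in0].
have sum0 : \sum_l (D l).2 * f l = 0.
  rewrite (bigD1 i) //= (bigD1 j) /=; last exact/eqP/nesym.
  rewrite big1 => [|l /andP [nli nlj]]; last by rewrite /f (negbTE nli) (negbTE nlj) mulr0.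
  rewrite /f eqxx; case: eqP => [eji|_]; first by case: nij.
  by rewrite eqxx mulrN !mul_cofactor // addr0 subrr.
have := Ddirect f hf; rewrite sum0 => /(_ (monomial_ideal0 hJ) i).
by rewrite /f eqxx mul_cofactor //; have [_] := stanley_cone_sub im.
Qed.

Lemma cone_partition_of_stanley_dec :
  cone_partition mon_quot (fun i => ((D i).1, a i)).
Proof.
split; [exact: stanley_cone_sub | exact: stanley_cone_cover |].
exact: stanley_cone_disjoint.
Qed.

End StanleyToCones.

Lemma has_sdec_depth_geP d : has_sdec_depth_ge I J d <-> has_cone_dec mon_quot d.
Proof.
rewrite has_cone_decP; split=> [[r [D [hD hd]]]|[r [F [hF hd]]]].
  have ch i : {ca : K * 'X_{1..k} | (D i).2 = ca.1 *: 'X_[ca.2]}.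
    apply: constructive_indefinite_description.
    by have [_ [c [a ->]]] := hD.1 i; exists (c, a).
  exists r, (fun i => ((D i).1, (sval (ch i)).2)); split => //.
  exact: (cone_partition_of_stanley_dec hD (fun i => svalP (ch i))).
exists r, (fun i => ((F i).1, 'X_[(F i).2])); split => //.
exact: stanley_dec_of_cone_partition.
Qed.

End Transfer.

Section Contraction.
Variable n : nat.
Notation top := (@ord_max n.+1).
Notation last := (@ord_max n).
Notation L := (lift top).
Implicit Types (u v : 'X_{1..n.+1}) (w : 'X_{1..n.+2}).

Definition contract_mon w : 'X_{1..n.+1} :=
  [multinom (if i == last then minn (w (L i)) (w top) else w (L i)) | i < n.+1].

Lemma ext_monL u j : ext_mon u (L j) = u j.
Proof. by rewrite /ext_mon mnmE liftK. Qed.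

Lemma ext_mon_top u : ext_mon u top = u last.
Proof. by rewrite /ext_mon mnmE unlift_none. Qed.

Lemma contract_monE w i : contract_mon w i =
  if i == last then minn (w (L i)) (w top) else w (L i).
Proof. by rewrite /contract_mon mnmE. Qed.

Lemma ext_mon_le u w : (ext_mon u <= w)%MM = (u <= contract_mon w)%MM.
Proof.
apply/mnm_lepP/mnm_lepP => H i.
  rewrite contract_monE; case: eqP => [->|_]; last by rewrite -ext_monL H.
  by rewrite leq_min -{1}ext_monL H -ext_mon_top H.
case: (unliftP top i) => [j ->|->].
  rewrite ext_monL; apply: leq_trans (H j) _; rewrite contract_monE.
  by case: eqP => // _; exact: geq_minl.
by rewrite ext_mon_top; apply: leq_trans (H last) _; rewrite contract_monE eqxx geq_minr.
Qed.

Lemma ext_ideal_monomial (K : fieldType) (I : polyset K n.+1) :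
  is_monomial_ideal (ext_ideal I).
Proof. by exists (fun w => exists u, min_gens I u /\ w = ext_mon u). Qed.

Lemma ext_idealX (K : fieldType) (I : polyset K n.+1) w : is_monomial_ideal I ->
  ext_ideal I 'X_[w] <-> I 'X_[contract_mon w].
Proof.
move=> hI; rewrite /ext_ideal mon_gen_idealP; split.
  move/(_ w); rewrite msuppX mem_head => /(_ isT) [s [u [[Iu _] ->]]].
  by rewrite ext_mon_le => le; exact: monomial_idealX_lem hI _ _ Iu le.
move=> Iw m; rewrite msuppX inE => /eqP ->.
have [u hu le] := min_gens_exists Iw.
by exists (ext_mon u); [exists u | rewrite ext_mon_le].
Qed.

Lemma mon_quot_ext (K : fieldType) (I J : polyset K n.+1) w :
  is_monomial_ideal I -> is_monomial_ideal J ->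
  mon_quot (ext_ideal I) (ext_ideal J) w <-> mon_quot I J (contract_mon w).
Proof.
move=> hI hJ; have EI := ext_idealX w hI; have EJ := ext_idealX w hJ.
by split=> [[/EI Iw nJw]|[/EI Iw nJw]]; split=> // /EJ.
Qed.

End Contraction.

Section LiftCones.
Variable n : nat.
Notation top := (@ord_max n.+1).
Notation last := (@ord_max n).
Notation L := (lift top).
Implicit Types (x : cone n.+1) (w : 'X_{1..n.+2}) (Z : {set 'I_n.+1}).

Definition lift_set Z : {set 'I_n.+2} := [set L j | j in Z].

Lemma mem_lift_set Z j : (L j \in lift_set Z) = (j \in Z).
Proof. exact/mem_imset/lift_inj. Qed.

Lemma top_notin_lift_set Z : top \notin lift_set Z.
Proof. by apply/imsetP => [[j _ E]]; move: (neq_lift top j); rewrite -E eqxx. Qed.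

Lemma card_lift_set Z : #|lift_set Z| = #|Z|.
Proof. exact/card_imset/lift_inj. Qed.

Lemma lift_eq_top j : (L j == top) = false.
Proof. by apply/negbTE; rewrite eq_sym neq_lift. Qed.

Lemma mem_lift_setU1 Z j : (L j \in top |: lift_set Z) = (j \in Z).
Proof. by rewrite in_setU1 lift_eq_top mem_lift_set. Qed.

Lemma forall_ord_lift (P : 'I_n.+2 -> Prop) :
  (forall i, P i) <-> (forall j, P (L j)) /\ P top.
Proof. by split=> [H|[H1 H2] i]; [split | case: (unliftP top i) => [j ->|->]]. Qed.

Lemma forall_ord_last (P : 'I_n.+1 -> Prop) :
  (forall i, P i) <-> (forall j, j != last -> P j) /\ P last.
Proof.
split=> [H|[H1 H2] i]; first by split.
by case: (eqVneq i last) => [->|]; [|exact: H1].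
Qed.

(* The cone [x] of the smaller ring is the image under [contract_mon] of the
   cone [top_cone x], plus [side_cone x] when [X_n] is not free in [x]. *)
Definition top_cone x : cone n.+2 := (top |: lift_set x.1, ext_mon x.2).
Definition side_cone x : cone n.+2 := (L last |: lift_set x.1, (ext_mon x.2 + U_(L last))%MM).

Definition lift_cone x : seq (cone n.+2) :=
  if last \in x.1 then [:: top_cone x] else [:: top_cone x; side_cone x].

Definition in_cone_but_last x w :=
  forall j, j != last -> (x.2 j <= w (L j) /\ (j \notin x.1 -> w (L j) = x.2 j))%N.

Lemma in_cone_contract x w : in_cone x (contract_mon w) <-> in_cone_but_last x w /\
  (x.2 last <= minn (w (L last)) (w top) /\
   (last \notin x.1 -> minn (w (L last)) (w top) = x.2 last))%N.
Proof.
rewrite -(rwP (in_coneP _ _)) forall_ord_last contract_monE eqxx.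
by split=> [[H1 H2]|[H1 H2]]; split => // j nj; move: (H1 j nj); rewrite contract_monE (negbTE nj).
Qed.

Lemma in_top_cone x w : in_cone (top_cone x) w <-> in_cone_but_last x w /\
  (x.2 last <= w (L last) /\ (last \notin x.1 -> w (L last) = x.2 last) /\
   x.2 last <= w top)%N.
Proof.
rewrite -(rwP (in_coneP _ _)) forall_ord_lift /= forall_ord_last.
split=> [[[H1 [H2 H2']] [H3 _]]|[H1 [H2 [H3 H4]]]].
  rewrite ext_mon_top in H3; rewrite ext_monL in H2; rewrite mem_lift_setU1 ext_monL in H2'.
  split=> // j nj; have [le eq] := H1 j nj.
  by rewrite mem_lift_setU1 ext_monL in eq; rewrite ext_monL in le.
split; [split; [|split]|split].
- by move=> j nj; have [le eq] := H1 j nj; rewrite mem_lift_setU1 !ext_monL.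
- by rewrite ext_monL.
- by rewrite mem_lift_setU1 ext_monL.
- by rewrite ext_mon_top.
- by rewrite in_setU1 eqxx.
Qed.

Lemma in_side_cone x w : last \notin x.1 ->
  in_cone (side_cone x) w <-> in_cone_but_last x w /\
  (x.2 last < w (L last) /\ w top = x.2 last)%N.
Proof.
move=> nlast; rewrite -(rwP (in_coneP _ _)) forall_ord_lift /= forall_ord_last.
have apexL j : (ext_mon x.2 + U_(L last))%MM (L j) = (x.2 j + (last == j))%N.
  by rewrite mnmDE mnm1E ext_monL (inj_eq lift_inj).
have apex_top : (ext_mon x.2 + U_(L last))%MM top = x.2 last.
  by rewrite mnmDE mnm1E ext_mon_top lift_eq_top addn0.
have memL j : j != last -> (L j \in L last |: lift_set x.1) = (j \in x.1).
  by move=> nj; rewrite in_setU1 (inj_eq lift_inj) (negbTE nj) mem_lift_set.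
have mem_top : (top \in L last |: lift_set x.1) = false.
  by rewrite in_setU1 eq_sym lift_eq_top (negbTE (top_notin_lift_set _)).
split=> [[[H1 [H2 _]] [H3 H4]]|[H1 [H2 H3]]].
  rewrite apexL eqxx addn1 in H2; rewrite apex_top mem_top in H4.
  split=> [j nj|]; last by split => //; exact: H4.
  have [le eq] := H1 j nj.
  rewrite apexL eq_sym (negbTE nj) addn0 in le.
  by rewrite memL // apexL eq_sym (negbTE nj) addn0 in eq.
split; [split; [|split]|split].
- by move=> j nj; have [le eq] := H1 j nj; rewrite memL // apexL eq_sym (negbTE nj) addn0.
- by rewrite apexL eqxx addn1.
- by rewrite in_setU1 eqxx.
- by rewrite apex_top H3.
- by rewrite apex_top.
Qed.

Lemma in_top_cone_free x w : last \in x.1 ->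
  in_cone (top_cone x) w = in_cone x (contract_mon w).
Proof.
move=> hlast; apply/idP/idP.
  move/in_top_cone => [H1 [H2 [_ H4]]]; apply/in_cone_contract; split => //.
  by rewrite leq_min H2 H4 hlast.
move/in_cone_contract => [H1 [H2 _]]; apply/in_top_cone; split => //.
by rewrite hlast; move: H2; rewrite leq_min => /andP [-> ->].
Qed.

Lemma in_top_side_cone x w : last \notin x.1 ->
  (in_cone (top_cone x) w + in_cone (side_cone x) w)%N = in_cone x (contract_mon w).
Proof.
move=> nlast; case: (boolP (in_cone x (contract_mon w))) => [/in_cone_contract|nx].
  move=> [H1 [H2 /(_ nlast) H3]].
  case: (leqP (w (L last)) (w top)) => le.
    have e : w (L last) = x.2 last by rewrite -H3 (minn_idPl le).
    have -> : in_cone (top_cone x) w.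
      by apply/in_top_cone; split => //; split; [rewrite e|split => //; rewrite -e].
    suff -> : in_cone (side_cone x) w = false by [].
    by apply/negbTE/negP => /(in_side_cone _ nlast) [_ [+ _]]; rewrite e ltnn.
  have e : w top = x.2 last by rewrite -H3 (minn_idPr (ltnW le)).
  have -> : in_cone (side_cone x) w.
    by apply/(in_side_cone _ nlast); split => //; split => //; rewrite -e.
  suff -> : in_cone (top_cone x) w = false by [].
  apply/negbTE/negP => /in_top_cone [_ [_ [H5 _]]]; move: (H5 nlast) le => ->.
  by rewrite e ltnn.
have -> : in_cone (top_cone x) w = false.
  apply/negbTE/negP => /in_top_cone [H1 [H2 [H3 H4]]]; case/negP: nx; apply/in_cone_contract.
  by split => //; rewrite (H3 nlast) (minn_idPl _) ?leqnn // -(H3 nlast).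
suff -> : in_cone (side_cone x) w = false by [].
apply/negbTE/negP => /(in_side_cone _ nlast) [H1 [H2 H3]]; case/negP: nx.
by apply/in_cone_contract; split => //; rewrite H3 (minn_idPr (ltnW H2)).
Qed.

Lemma count_lift_cone x w :
  count (fun y => in_cone y w) (lift_cone x) = in_cone x (contract_mon w).
Proof.
rewrite /lift_cone; case: ifP => [hlast|/negbT nlast] /=; rewrite addn0.
  by rewrite in_top_cone_free.
by rewrite in_top_side_cone.
Qed.

Lemma card_lift_cone x y : y \in lift_cone x -> #|y.1| = #|x.1|.+1.
Proof.
rewrite /lift_cone; case: ifP => hlast; rewrite !inE.
  by move/eqP => -> /=; rewrite cardsU1 top_notin_lift_set card_lift_set.
case/orP => /eqP -> /=; rewrite cardsU1 card_lift_set.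
  by rewrite top_notin_lift_set.
by rewrite mem_lift_set hlast.
Qed.

Lemma has_cone_dec_lift (M : 'X_{1..n.+1} -> Prop) (M' : 'X_{1..n.+2} -> Prop) d :
  (forall w, M' w <-> M (contract_mon w)) -> has_cone_dec M d -> has_cone_dec M' d.+1.
Proof.
move=> MM' [s hs hd]; exists (flatten [seq lift_cone x | x <- s]).
  move=> w; rewrite count_flatten -map_comp (pbool_iff (MM' w)) -hs -sumn_count.
  by congr sumn; apply: eq_map => x /=; rewrite count_lift_cone.
move=> y /flattenP [t /mapP [x xs ->]] yt.
by rewrite (card_lift_cone yt) ltnS hd.
Qed.

End LiftCones.

Section RestrictCones.
Variable n : nat.
Notation top := (@ord_max n.+1).
Notation last := (@ord_max n).
Notation L := (lift top).
Implicit Types (y : cone n.+2) (v : 'X_{1..n.+1}).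

Definition slice_mon (N : nat) v : 'X_{1..n.+2} :=
  [multinom (if unlift top i is Some j then v j else (v last + N)%N) | i < n.+2].

Lemma slice_monL N v j : slice_mon N v (L j) = v j.
Proof. by rewrite /slice_mon mnmE liftK. Qed.

Lemma slice_mon_top N v : slice_mon N v top = (v last + N)%N.
Proof. by rewrite /slice_mon mnmE unlift_none. Qed.

Lemma contract_slice_mon N v : contract_mon (slice_mon N v) = v.
Proof.
apply/mnmP => j; rewrite contract_monE !slice_monL slice_mon_top.
by case: eqP => [->|//]; rewrite (minn_idPl _) // leq_addr.
Qed.

Definition restrict_cone y : cone n.+1 :=
  ([set j | L j \in y.1], [multinom y.2 (L j) | j < n.+1]).

Lemma in_cone_slice N y v : (y.2 top < N)%N ->
  in_cone y (slice_mon N v) = (top \in y.1) && in_cone (restrict_cone y) v.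
Proof.
move=> lt; apply/idP/andP.
  move/in_coneP/forall_ord_lift => [H1 [_ H2]]; split.
    apply: NNPP => /negP /H2; rewrite slice_mon_top => e.
    by move: lt; rewrite -e ltnNge leq_addl.
  apply/in_coneP => j; have [le eq] := H1 j; rewrite slice_monL in le eq.
  by rewrite /restrict_cone /= mnmE inE.
case=> htop /in_coneP H; apply/in_coneP/forall_ord_lift; split.
  by move=> j; have [le eq] := H j; move: le eq; rewrite /restrict_cone /= mnmE inE slice_monL.
rewrite slice_mon_top htop; split => //.
exact: leq_trans (ltnW lt) (leq_addl _ _).
Qed.

Lemma card_restrict_cone y : top \in y.1 -> #|y.1| = #|(restrict_cone y).1|.+1.
Proof.
move=> htop; have -> : y.1 = top |: lift_set (restrict_cone y).1.
  apply/setP => i; rewrite in_setU1; case: (unliftP top i) => [j ->|->].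
    by rewrite lift_eq_top mem_lift_set /restrict_cone /= inE.
  by rewrite eqxx htop.
by rewrite cardsU1 top_notin_lift_set card_lift_set.
Qed.

(* On the slice [w top = w last + N], with [N] beyond the [top] coordinate of
   every apex, exactly the cones in which [X_(n+1)] is free meet the slice. *)
Lemma has_cone_dec_restrict (M : 'X_{1..n.+1} -> Prop) (M' : 'X_{1..n.+2} -> Prop) d :
  (forall w, M' w <-> M (contract_mon w)) -> has_cone_dec M' d.+1 -> has_cone_dec M d.
Proof.
move=> MM' [s hs hd].
pose N := (\max_(y <- s) y.2 top).+1.
have ltN y : y \in s -> (y.2 top < N)%N.
  by move=> ys; rewrite ltnS; exact: (leq_bigmax_seq (F := fun y : cone n.+2 => y.2 top) y ys).
exists (map restrict_cone [seq y <- s | top \in (y : cone n.+2).1]).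
  move=> v; rewrite count_map count_filter -[in RHS](contract_slice_mon N v).
  rewrite -(pbool_iff (MM' _)) -hs; apply: eq_in_count => y ys /=.
  by rewrite in_cone_slice ?ltN // andbC.
move=> x /mapP [y]; rewrite mem_filter => /andP [htop ys] ->.
by have := hd y ys; rewrite card_restrict_cone.
Qed.

End RestrictCones.

Section Dickson.
Variable k : nat.
Implicit Types (P : 'X_{1..k} -> Prop) (C : {set 'I_k}) (L : seq 'X_{1..k}).

Definition basis_on C P L :=
  (forall l, l \in L -> P l) /\
  forall m, P m -> exists2 l, l \in L & forall i, i \in C -> (l i <= m i)%N.

Definition fibre P (p : 'I_k * nat) (m : 'X_{1..k}) := P m /\ m p.1 = p.2.

Lemma basis_on_fibre C P p L :
  basis_on (C :\ p.1) (fibre P p) L -> basis_on C (fibre P p) L.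
Proof.
case=> LP Lcov; split => // m Pm; have [l hl H] := Lcov m Pm.
exists l => // i iC; case: (eqVneq i p.1) => [->|ni].
  by have [_ ->] := LP l hl; case: Pm => _ ->.
by apply: H; rewrite in_setD1 ni.
Qed.

Lemma basis_on_fibres C P (ps : seq ('I_k * nat)) :
  (forall p, p \in ps -> exists L, basis_on C (fibre P p) L) ->
  exists L, basis_on C (fun m => P m /\ exists2 p, p \in ps & m p.1 = p.2) L.
Proof.
elim: ps => [|p ps IHps] hps; first by exists [::]; split => // m [_ []].
have [L1 [L1P L1cov]] := hps p (mem_head _ _).
have [L2 [L2P L2cov]] : exists L, basis_on C (fun m => P m /\ exists2 q, q \in ps & m q.1 = q.2) L.
  by apply: IHps => q hq; apply: hps; rewrite inE hq orbT.
exists (L1 ++ L2); split.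
  move=> l; rewrite mem_cat => /orP [/L1P [Pl e] | /L2P [Pl [q hq e]]]; split => //.
    by exists p; rewrite ?mem_head.
  by exists q; rewrite // inE hq orbT.
move=> m [Pm [q]]; rewrite inE => /orP [/eqP -> e | hq e].
  by have [l hl H] := L1cov m (conj Pm e); exists l; rewrite ?mem_cat ?hl.
have [l hl H] : exists2 l, l \in L2 & forall i, i \in C -> (l i <= m i)%N.
  by apply: L2cov; split => //; exists q.
by exists l; rewrite ?mem_cat ?hl ?orbT.
Qed.

(* An element [m0] of [P] bounds [P] on [C] except on the fibres
   [m i = v] with [i \in C] and [v < m0 i], each of which needs one coordinate
   less. *)
Lemma basis_on_step C P :
  (forall i, i \in C -> forall Q, exists L, basis_on (C :\ i) Q L) ->
  exists L, basis_on C P L.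
Proof.
move=> IH; case: (classic (exists m0, P m0)) => [[m0 Pm0]|nP]; last first.
  by exists [::]; split => // m Pm; case: nP; exists m.
pose ps := [seq (i, v) | i <- enum C, v <- iota 0 (mdeg m0)].
have [L [LP Lcov]] : exists L,
    basis_on C (fun m => P m /\ exists2 p, p \in ps & m p.1 = p.2) L.
  apply: basis_on_fibres => p /allpairsP [[i v] [iC _ ->]] /=.
  rewrite mem_enum in iC; have [L hL] := IH i iC (fibre P (i, v)).
  by exists L; exact: basis_on_fibre.
exists (m0 :: L); split.
  by move=> l; rewrite inE => /orP [/eqP -> | /LP []].
move=> m Pm; case: (boolP [forall i in C, m0 i <= m i]%N) => [/forall_inP m0m|].
  by exists m0; rewrite ?mem_head.
case/forall_inPn => i iC; rewrite -ltnNge => lt.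
have hp : (i, m i) \in ps.
  apply: allpairs_f; first by rewrite mem_enum.
  rewrite mem_iota add0n; apply: leq_trans lt _; rewrite mdegE.
  by rewrite (bigD1 i) //= leq_addr.
have [l hl Hl] : exists2 l, l \in L & forall i, i \in C -> (l i <= m i)%N.
  by apply: Lcov; split => //; exists (i, m i).
by exists l; rewrite // inE hl orbT.
Qed.

Lemma basis_on_exists C P : exists L, basis_on C P L.
Proof.
move: {2}#|C| (leqnn #|C|) => c; elim: c P C => [|c IH] P C hC;
  apply: basis_on_step => i iC Q.
  by move: hC; rewrite leqn0 cards_eq0 => /eqP C0; rewrite C0 inE in iC.
by apply: IH; move: hC; rewrite (cardsD1 i) iC add1n ltnS.
Qed.

Lemma dickson P : exists L : seq 'X_{1..k},
  (forall l, l \in L -> P l) /\ forall m, P m -> exists2 l, l \in L & (l <= m)%MM.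
Proof.
have [L [LP Lcov]] := basis_on_exists [set: 'I_k] P.
exists L; split => // m Pm; have [l hl H] := Lcov m Pm; exists l => //.
by apply/mnm_lepP => i; apply: H; rewrite inE.
Qed.

End Dickson.

Section BoxCones.
Variable k : nat.
Implicit Types (m : 'X_{1..k}) (M : 'X_{1..k} -> Prop).

Definition trunc_mon (N : nat) m : 'X_{1..k} := [multinom minn (m i) N | i < k].

Lemma trunc_mon_le N m : (trunc_mon N m <= m)%MM.
Proof. by apply/mnm_lepP => i; rewrite mnmE geq_minl. Qed.

Lemma monomial_ideal_trunc (K : fieldType) (I : polyset K k) : is_monomial_ideal I ->
  exists N, forall N', (N <= N')%N -> forall m, I 'X_[m] <-> I 'X_[trunc_mon N' m].
Proof.
move=> hI; have [L [LI Lcov]] := dickson (fun m => I 'X_[m]).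
exists (\max_(l <- L) mdeg l) => N' le m; split => Im; last first.
  exact: monomial_idealX_lem hI _ _ Im (trunc_mon_le _ _).
have [l hl lm] := Lcov m Im; apply: monomial_idealX_lem hI _ _ (LI l hl) _.
apply/mnm_lepP => i; rewrite mnmE leq_min (mnm_lepP lm i) /=.
apply: leq_trans le; apply: (@leq_trans (mdeg l)).
  by rewrite mdegE (bigD1 i) //= leq_addr.
exact: (leq_bigmax_seq (F := fun l => mdeg l) l hl).
Qed.

Definition box_cone N (f : {ffun 'I_k -> 'I_N.+1}) : cone k :=
  ([set i | (f i : nat) == N], [multinom (f i : nat) | i < k]).

Lemma in_box_cone N (f : {ffun 'I_k -> 'I_N.+1}) m :
  in_cone (box_cone f) m = ((box_cone f).2 == trunc_mon N m).
Proof.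
apply/in_coneP/eqP => [H|e i].
  apply/mnmP => i; rewrite !mnmE; have [le eq] := H i; move: le eq; rewrite /= inE !mnmE.
  have := ltn_ord (f i); case: eqP => [e _ le _|nN lt le /(_ isT) e]; lia.
have := congr1 (fun x : 'X_{1..k} => x i) e; rewrite /= !mnmE inE => e'.
by split => [|hn]; lia.
Qed.

Lemma has_cone_dec_trunc M N :
  (forall m, M m <-> M (trunc_mon N m)) -> has_cone_dec M 0.
Proof.
move=> MT; pose T := {ffun 'I_k -> 'I_N.+1}.
exists [seq box_cone f | f : T <- enum T & pbool (M (box_cone f).2)] => // m.
pose ft : T := [ffun i => inord (minn (m i) N)].
have box_ft f : ((box_cone f).2 == trunc_mon N m) = (f == ft).
  apply/eqP/eqP => [e|->].
    apply/ffunP => i; apply/val_inj; rewrite ffunE /= inordK ?ltnS ?geq_minr //.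
    by have := congr1 (fun x : 'X_{1..k} => x i) e; rewrite /= !mnmE.
  by apply/mnmP => i; rewrite !mnmE ffunE inordK // ltnS geq_minr.
have apex_ft : (box_cone ft).2 = trunc_mon N m by apply/eqP; rewrite box_ft.
rewrite count_map count_filter (pbool_iff (MT m)).
rewrite (eq_count (a2 := fun f => pbool (M (trunc_mon N m)) && (f == ft))); last first.
  move=> f /=; rewrite in_box_cone box_ft.
  by case: eqP => [->|_]; rewrite ?andbF // andbT -apex_ft.
case: pboolP => _; last by rewrite (eq_count (a2 := pred0)) ?count_pred0.
by rewrite (eq_count (a2 := pred1 ft)) // count_uniq_mem ?enum_uniq // mem_enum.
Qed.

End BoxCones.

Lemma has_cone_dec_mon_quot (K : fieldType) k (I J : polyset K k) :
  is_monomial_ideal I -> is_monomial_ideal J -> has_cone_dec (mon_quot I J) 0.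
Proof.
move=> hI hJ; have [NI HI] := monomial_ideal_trunc hI.
have [NJ HJ] := monomial_ideal_trunc hJ.
apply: (@has_cone_dec_trunc _ _ (maxn NI NJ)) => m.
have EI := HI _ (leq_maxl NI NJ) m; have EJ := HJ _ (leq_maxr NI NJ) m.
by split=> [[/EI Im nJm]|[/EI Im nJm]]; split=> // /EJ.
Qed.

Section Sdepth.
Variables (K : fieldType) (k : nat) (I J : polyset K k).

Lemma sdepth_le : (sdepth I J <= k)%N.
Proof. by apply/bigmax_leqP => i _; rewrite -ltnS ltn_ord. Qed.

Lemma sdepth_max d : (d <= k)%N -> has_sdec_depth_ge I J d -> (d <= sdepth I J)%N.
Proof.
move=> dk hd; rewrite /sdepth.
apply: (leq_bigmax_cond (F := fun d : 'I_k.+1 => nat_of_ord d) (Ordinal (dk : (d < k.+1)%N))).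
exact/pboolP.
Qed.

(* Without any decomposition the maximum is over an empty range. *)
Lemma sdepth_attained :
  has_sdec_depth_ge I J 0 -> has_sdec_depth_ge I J (sdepth I J).
Proof.
move=> h0; rewrite /sdepth (bigmax_eq_arg (ord0 : 'I_k.+1)); last exact/pboolP.
by case: arg_maxnP => [|i /pboolP Pi _]; [exact/pboolP|].
Qed.

Lemma sdepth_eq s : (s <= k)%N -> has_sdec_depth_ge I J s ->
  (forall d, (d <= k)%N -> has_sdec_depth_ge I J d -> (d <= s)%N) -> sdepth I J = s.
Proof.
move=> sk hs smax; apply/eqP; rewrite eqn_leq sdepth_max // andbT.
by apply/bigmax_leqP => i /pboolP hi; apply: smax; rewrite // -ltnS ltn_ord.
Qed.

End Sdepth.

Lemma has_sdec_depth_ge_ext (K : fieldType) n (I J : polyset K n.+1) d :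
  is_monomial_ideal I -> is_monomial_ideal J ->
  has_sdec_depth_ge (ext_ideal I) (ext_ideal J) d.+1 <-> has_sdec_depth_ge I J d.
Proof.
move=> hI hJ; have hI' := ext_ideal_monomial I; have hJ' := ext_ideal_monomial J.
have MM' w := mon_quot_ext w hI hJ.
split=> [/(has_sdec_depth_geP hI' hJ') | /(has_sdec_depth_geP hI hJ)] h.
  exact/(has_sdec_depth_geP hI hJ)/(has_cone_dec_restrict MM').
exact/(has_sdec_depth_geP hI' hJ')/(has_cone_dec_lift MM').
Qed.

Theorem proposition5p2 (K : fieldType) (n : nat) (I J : polyset K n.+1) :
  is_monomial_ideal I -> is_monomial_ideal J ->
  (forall p, J p -> I p) -> (exists p, I p /\ ~ J p) ->
  sdepth (ext_ideal I) (ext_ideal J) = (sdepth I J).+1.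
Proof.
move=> hI hJ _ _.
have ext_depth d := has_sdec_depth_ge_ext d hI hJ.
have h0 : has_sdec_depth_ge I J 0.
  by apply/(has_sdec_depth_geP hI hJ); exact: has_cone_dec_mon_quot.
apply: sdepth_eq; first by rewrite ltnS sdepth_le.
  by apply/ext_depth; exact: sdepth_attained.
by move=> [|d] // dk /ext_depth hd; rewrite ltnS sdepth_max.
Qed.
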